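(* Let $\mathcal{D}=(V,\Phi)$ be a finite directed graph with adjacency matrix $M\in\{0,1\}^{V\times V}$ ($M_{vw}=1$ iff $(v,w)\in\Phi$). Let $\boldsymbol{\alpha}(t),\boldsymbol{\beta}(t)\in[0,+\infty)^V$ ($t\ge0$) be vector sequences such that $\boldsymbol{\alpha}(t)$ is non-decreasing in every component and $\boldsymbol{\beta}(t)$ is convergent, and let $\mathbf{r},\mathbf{s}\in(0,+\infty)^V$ with $r_v=s_v^{-1}$ for all $v$. Set $W_{vw}=r_vM_{vw}s_w$. Define $\boldsymbol{\omega}(t),\boldsymbol{\eta}(t)$ by $\boldsymbol{\omega}(0)=\boldsymbol{\eta}(0)=\mathbf{1}$ and, for all $v\in V$, $t\ge0$, $$\omega_v(t+1)=\frac{1}{1+\alpha_v(t)+\sum_{w}W_{vw}(1-\omega_w(t))},\qquad \eta_v(t+1)=1+\beta_v(t)+\sum_w M_{vw}\,\omega_w(t)\,\eta_w(t).$$ Assume that for every node $v$ belonging to a non-trivial strongly connected component of $\mathcal{D}$ there exists a node $w$ reachable from $v$ such that the sequence $\alpha_w(t)$ is not identically zero. Then $\boldsymbol{\eta}(t)$ converges, and $\boldsymbol{\omega}(t)$ converges and is non-increasing in every component. Moreover, $\lim_{t\to\infty}\omega_v(t)<1$ for every node $v$ such that there exists $w$ reachable from $v$ with $\alpha_w(t)$ not identically zero.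
   Context: A path from $v$ to $w$ of length $l\ge0$ is a list $(u_0,\dots,u_l)$ with $u_0=v$, $u_l=w$, $(u_{i-1},u_i)\in\Phi$; $w$ is reachable from $v$ if such a path exists for some $l\ge0$. A strongly connected component of $\mathcal{D}$ is a maximal induced subdigraph $\mathcal{D}[U]$ in which every node is reachable from every other node; it is trivial if it consists of a single node without a self-loop, and non-trivial otherwise. *)

From HB Require Import structures.
From mathcomp Require Import all_boot all_order all_algebra.
From mathcomp Require Import all_classical all_reals all_analysis.
Set Implicit Arguments. Unset Strict Implicit. Unset Printing Implicit Defensive.
Import Order.TTheory GRing.Theory Num.Theory.
Local Open Scope ring_scope.

(* Digraph D = (V, Phi) with V : finType and Phi : rel V (the arc relation).
   Reachability (paths of length l >= 0) is fingraph's [connect Phi]. *)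

Definition adjM {R : pzRingType} {V : finType} (Phi : rel V) (v w : V) : R :=
  (Phi v w)%:R.

Definition scc {V : finType} (Phi : rel V) (v : V) : {set V} :=
  [set u | connect Phi v u && connect Phi u v].

Definition trivial_scc {V : finType} (Phi : rel V) (U : {set V}) : bool :=
  (#|U| == 1%N) && [forall u in U, ~~ Phi u u].

Fixpoint omega_seq {R : realFieldType} {V : finType} (Phi : rel V)
  (alpha : V -> nat -> R) (r s : V -> R) (t : nat) : V -> R :=
  match t with
  | 0%N => fun _ => 1
  | t'.+1 => fun v =>
      1 / (1 + alpha v t' +
           \sum_(w : V) (r v * adjM Phi v w * s w) * (1 - omega_seq Phi alpha r s t' w))
  end.

Fixpoint eta_seq {R : realFieldType} {V : finType} (Phi : rel V)
  (alpha beta : V -> nat -> R) (r s : V -> R) (t : nat) : V -> R :=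
  match t with
  | 0%N => fun _ => 1
  | t'.+1 => fun v =>
      1 + beta v t' +
      \sum_(w : V) adjM Phi v w * omega_seq Phi alpha r s t' w * eta_seq Phi alpha beta r s t' w
  end.

From HB Require Import structures.
From mathcomp Require Import all_boot all_order all_algebra.
From mathcomp Require Import all_classical all_reals all_analysis.
From mathcomp Require Import ring lra.
Import Order.TTheory GRing.Theory Num.Theory numFieldNormedType.Exports.
Local Open Scope classical_set_scope.
Local Open Scope ring_scope.

Set Implicit Arguments. Unset Strict Implicit. Unset Printing Implicit Defensive.

(* The weights omega(t) decrease to a limit omega_lim.  Passing to the limit
   in their recursion shows that y := s (1 - omega_lim) is excessive for
   D := diag(omega_lim) M: D y <= y - s omega_lim alpha(t), strictly at nodes
   where alpha is not identically zero.  The strict inequality propagates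
   backwards along arcs, so D^N y < y at every node that reaches such a node
   (whence omega_lim < 1 there).  All other nodes lie in trivial strongly
   connected components, where D is nilpotent.  Hence D^N (y + e) < y + e for
   some N and small e > 0, and x := sum_(k < N) D^k (y + e) satisfies x > 0
   and D x < x.  Finally zeta := omega eta obeys the linear recurrence
   zeta(t+1) = omega(t+1) (1 + beta(t)) + diag(omega(t+1)) M zeta(t), whose
   coefficients converge to a contraction for the x-weighted max-norm; such a
   recurrence converges, and so does eta(t+1) = 1 + beta(t) + M zeta(t). *)

Section Matvec.
Variables (R : numDomainType) (V : finType).
Implicit Types (A : V -> V -> R) (f g : V -> R).

Definition matvec A f : V -> R := fun v => \sum_w A v w * f w.

Lemma matvec_ge0 A f v :
  (forall v w, 0 <= A v w) -> (forall w, 0 <= f w) -> 0 <= matvec A f v.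
Proof. by move=> A0 f0; apply: sumr_ge0 => w _; rewrite mulr_ge0. Qed.

Lemma ler_matvec A f g v : (forall v w, 0 <= A v w) ->
  (forall w, f w <= g w) -> matvec A f v <= matvec A g v.
Proof. by move=> A0 fg; apply: ler_sum => w _; rewrite ler_wpM2l. Qed.

Lemma matvecD A f g v :
  matvec A (fun w => f w + g w) v = matvec A f v + matvec A g v.
Proof. by rewrite /matvec -big_split; apply: eq_bigr => w _; rewrite mulrDr. Qed.

Lemma matvecZ A c f v : matvec A (fun w => c * f w) v = c * matvec A f v.
Proof. by rewrite /matvec mulr_sumr; apply: eq_bigr => w _; rewrite mulrCA. Qed.

Lemma matvecB A f g v :
  matvec A (fun w => f w - g w) v = matvec A f v - matvec A g v.
Proof. by rewrite /matvec -sumrB; apply: eq_bigr => w _; rewrite mulrBr. Qed.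

Lemma matvec_sum A n (F : 'I_n -> V -> R) v :
  matvec A (fun w => \sum_(k < n) F k w) v = \sum_(k < n) matvec A (F k) v.
Proof. by rewrite /matvec; under eq_bigr do rewrite mulr_sumr; exact: exchange_big. Qed.

Lemma iter_matvec_ge0 A f k v : (forall v w, 0 <= A v w) ->
  (forall w, 0 <= f w) -> 0 <= iter k (matvec A) f v.
Proof. by move=> A0 f0; elim: k v => [|k IH] v //=; exact: matvec_ge0. Qed.

Lemma iter_matvecDZ A f g c k v :
  iter k (matvec A) (fun w => f w + c * g w) v =
  iter k (matvec A) f v + c * iter k (matvec A) g v.
Proof.
elim: k v => [//|k IH] v /=.
by rewrite -matvecZ -matvecD; apply: eq_bigr => w _; rewrite IH.
Qed.

Lemma matvec_certificate A z N : (forall v w, 0 <= A v w) ->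
  (forall v, 0 < z v) -> (forall v, iter N (matvec A) z v < z v) ->
  exists x, (forall v, 0 < x v) /\ (forall v, matvec A x v < x v).
Proof.
move=> A0 z_gt0 zN.
have z0 w : 0 <= z w by exact: ltW.
case: N zN => [zN|N zN].
  by exists z; split => // v; have := zN v; rewrite ltxx.
have iter_ge0 k w : 0 <= iter k (matvec A) z w by exact: iter_matvec_ge0.
exists (fun v => \sum_(k < N.+1) iter k (matvec A) z v); split => v.
  rewrite big_ord_recl /=; apply: lt_le_trans (z_gt0 v) _.
  by rewrite lerDl; apply: sumr_ge0 => k _; exact: (iter_ge0 k.+1).
rewrite (matvec_sum _ (fun k : 'I_N.+1 => iter k (matvec A) z)).
rewrite big_ord_recr /= [X in _ < X]big_ord_recl /=.
by rewrite [X in _ < X]addrC ltrD2l; exact: zN.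
Qed.

End Matvec.

Section Reachability.
Variables (V : finType) (Phi : rel V).

Lemma trivial_scc_arc v w :
  trivial_scc Phi (scc Phi v) -> Phi v w -> ~~ connect Phi w v.
Proof.
move=> /andP[/cards1P[u scc_u] /forallP noloop] Pvw; apply/negP => cwv.
have in_scc x : x \in scc Phi v -> x = u by rewrite scc_u inE => /eqP.
have v_scc : v \in scc Phi v by rewrite inE connect0.
have w_scc : w \in scc Phi v by rewrite inE (connect1 Pvw) cwv.
move: (noloop v); rewrite v_scc /= [X in Phi v X](in_scc v v_scc).
by rewrite -(in_scc w w_scc) Pvw.
Qed.

Lemma card_reach_arc_lt v w : trivial_scc Phi (scc Phi v) -> Phi v w ->
  (#|[set u | connect Phi w u]%SET| < #|[set u | connect Phi v u]%SET|)%N.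
Proof.
move=> triv Pvw; apply: proper_card; rewrite properE; apply/andP; split.
  by apply/fintype.subsetP => u; rewrite !inE; exact: connect_trans (connect1 Pvw).
by apply/fintype.subsetPn; exists v; rewrite !inE ?connect0 // trivial_scc_arc.
Qed.

End Reachability.

Section LinearRecurrence.
Variables (R : realType) (V : finType).
Implicit Types (A : V -> V -> R) (b x : V -> R).

Lemma perturbed_contraction_cvg0 (m eps : nat -> R) (lam : R) :
  0 <= lam < 1 -> (forall t, 0 <= m t) -> eps @ \oo --> 0 ->
  (\forall t \near \oo, m t.+1 <= lam * m t + eps t) -> m @ \oo --> 0.
Proof.
move=> /andP[lam0 lam1] m0 eps0 mS; apply/cvgrPdist_le => d d0.
have c0 : 0 < d * (1 - lam) / 2 by rewrite divr_gt0 // mulr_gt0 // subr_gt0.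
have [T _ step_T] : \forall t \near \oo,
    m t.+1 <= lam * m t + eps t /\ eps t <= d * (1 - lam) / 2.
  by near=> t; split; near: t; [exact: mS | exact: (cvgr_le _ eps0)].
have bound k : m (T + k)%N <= lam ^+ k * m T + d / 2.
  elim: k => [|k IH]; first by rewrite addn0 expr0 mul1r lerDl divr_ge0 // ltW.
  have [mS_Tk eps_Tk] := step_T (T + k)%N (leq_addr _ _).
  rewrite addnS exprS -mulrA; have := ler_wpM2l lam0 IH; nra.
have [K _ geom_K] : \forall k \near \oo, lam ^+ k * m T <= d / 2.
  apply: (cvgr_le 0); last by rewrite divr_gt0.
  rewrite -(mul0r (m T)); apply: cvgMl; apply: cvg_expr; rewrite ger0_norm //.
exists (T + K)%N => // t tTK; rewrite sub0r normrN ger0_norm //.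
have Tt : (T <= t)%N by apply: leq_trans tTK; exact: leq_addr.
rewrite -(subnKC Tt); apply: le_trans (bound _) _.
have := geom_K (t - T)%N; rewrite /= leq_subRL // => /(_ tTK); lra.
Unshelve. all: by end_near. Qed.

Lemma cvg_sumr (f : nat -> V -> R) (l : V -> R) :
  (forall v, (fun t => f t v) @ \oo --> l v) ->
  (fun t => \sum_v f t v) @ \oo --> \sum_v l v.
Proof. by move=> cf; apply: cvg_big => [|v _]; [exact: add_continuous | exact: cf]. Qed.

Lemma cvg_matvec (A : nat -> V -> V -> R) (Ast : V -> V -> R)
    (f : nat -> V -> R) (fst : V -> R) v :
  (forall v w, (fun t => A t v w) @ \oo --> Ast v w) ->
  (forall w, (fun t => f t w) @ \oo --> fst w) ->
  (fun t => matvec (A t) (f t) v) @ \oo --> matvec Ast fst v.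
Proof. by move=> cA cf; apply: cvg_sumr => w; exact: cvgM. Qed.

Lemma matvec_fixpoint A b x lam :
  (forall v w, 0 <= A v w) -> (forall v, 0 <= b v) -> (forall v, 0 < x v) ->
  lam < 1 -> (forall v, matvec A x v <= lam * x v) ->
  exists p : V -> R, forall v, p v = b v + matvec A p v.
Proof.
move=> A0 b0 x0 lam1 Ax.
pose F f v := b v + matvec A f v.
pose p k := iter k F (fun=> 0).
pose C := \big[Num.max/0]_v (b v / x v) / (1 - lam).
have lam1' : 1 - lam != 0 by rewrite subr_eq0 gt_eqF.
have C0 : 0 <= C by apply: divr_ge0; [exact: bigmax_ge_id | rewrite subr_ge0 ltW].
have b_le v : b v <= C * (1 - lam) * x v.
  by rewrite divfK // -ler_pdivrMr //; exact: le_bigmax.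
have p_le k v : p k v <= C * x v.
  elim: k v => [|k IH] v; first by rewrite mulr_ge0 // ltW.
  have := ler_matvec v A0 IH; rewrite matvecZ => Ap.
  have := ler_wpM2l C0 (Ax v); have := b_le v; rewrite /p /= /F; nra.
have p_nd v : nondecreasing_seq (p ^~ v).
  apply/nondecreasing_seqP => k; elim: k v => [|k IH] v.
    by apply: addr_ge0 => //; exact: matvec_ge0.
  by rewrite /p /= /F lerD2l; apply: ler_matvec.
have p_cvg v : p ^~ v @ \oo --> sup (range (p ^~ v)).
  by apply: nondecreasing_cvgn => //; exists (C * x v) => _ [k _ <-].
exists (fun v => sup (range (p ^~ v))) => v.
apply: (@cvg_unique _ _ _ _ _ _ (p_cvg v)); first exact: norm_hausdorff.
rewrite /= -cvg_shiftS.
by apply: cvgD; [exact: cvg_cst | apply: cvg_matvec => // *; exact: cvg_cst].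
Qed.

Lemma matvec_perturbed_contraction_cvg0 (A : nat -> V -> V -> R) (u eps : nat -> V -> R) x lam :
  0 <= lam < 1 -> (forall v, 0 < x v) -> (forall t v w, 0 <= A t v w) ->
  (forall t v, 0 <= u t v) -> (forall v, (fun t => eps t v) @ \oo --> 0) ->
  (\forall t \near \oo, forall v, matvec (A t) x v <= lam * x v) ->
  (forall t v, u t.+1 v <= eps t v + matvec (A t) (u t) v) ->
  forall v, (fun t => u t v) @ \oo --> 0.
Proof.
move=> lam01 x0 A0 u0 eps0 [T _ AxT] uS v.
have /andP[lam0 _] := lam01.
(* The x-weighted max-norm m of u contracts by lam, up to the error e. *)
pose m t := \big[Num.max/0]_v (u t v / x v).
pose e t := \sum_v `|eps t v| / x v.
have m_ge0 t : 0 <= m t by exact: bigmax_ge_id.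
have e_ge0 t : 0 <= e t by apply: sumr_ge0 => w _; rewrite divr_ge0 // ltW.
have u_le t w : u t w <= m t * x w by rewrite -ler_pdivrMr //; exact: le_bigmax.
have eps_le t w : eps t w <= e t * x w.
  rewrite -ler_pdivrMr // /e (bigD1 w) //=.
  have : eps t w / x w <= `|eps t w| / x w by rewrite ler_pM2r ?invr_gt0 // ler_norm.
  have : 0 <= \sum_(i | i != w) `|eps t i| / x i.
    by apply: sumr_ge0 => i _; rewrite divr_ge0 // ltW.
  lra.
have m_cvg0 : m @ \oo --> 0.
  apply: (@perturbed_contraction_cvg0 m e lam lam01 m_ge0).
  - have -> : 0 = \sum_v `|0 : R| / x v by rewrite big1 // => w _; rewrite normr0 mul0r.
    by apply: cvg_sumr => w; apply: cvgMl; exact: cvg_norm.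
  exists T => // t Tt; apply: bigmax_le => [|w _].
    by apply: addr_ge0 => //; apply: mulr_ge0.
  rewrite ler_pdivrMr //; apply: le_trans (uS t w) _.
  have := ler_matvec w (A0 t) (u_le t); rewrite matvecZ.
  have := ler_wpM2l (m_ge0 t) (AxT t Tt w); have := eps_le t w; nra.
apply: (@squeeze_cvgr _ _ _ _ (fun=> 0) (fun t => m t * x v)).
- by apply: nearW => t; rewrite u0 u_le.
- exact: cvg_cst.
- by rewrite -(mul0r (x v)); apply: cvgMl.
Qed.

Lemma contraction_factor A x : (forall v, 0 < x v) ->
  (forall v, matvec A x v < x v) ->
  exists2 lam, 0 <= lam < 1 & forall v, matvec A x v < lam * x v.
Proof.
move=> x0 Ax.
have Alam : \forall lam \near (1 : R)^'-, forall v, matvec A x v < lam * x v.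
  apply: filter_forall => v; near=> l; rewrite -ltr_pdivrMr //; near: l.
  by apply: nbhs_left_gt; rewrite ltr_pdivrMr // mul1r.
near (1 : R)^'- => lam.
exists lam; last exact: (near Alam lam).
by apply/andP; split; near: lam; [exact: (nbhs_left_ge ltr01) | exact: nbhs_left_lt].
Unshelve. all: by end_near. Qed.

Lemma matvec_recurrence_cvg (A : nat -> V -> V -> R) (Ast : V -> V -> R)
    (b : nat -> V -> R) (bst : V -> R) (z : nat -> V -> R) x :
  (forall t v w, 0 <= A t v w) ->
  (forall v w, (fun t => A t v w) @ \oo --> Ast v w) ->
  (forall v, (fun t => b t v) @ \oo --> bst v) -> (forall v, 0 <= bst v) ->
  (forall v, 0 < x v) -> (forall v, matvec Ast x v < x v) ->
  (forall t v, z t.+1 v = b t v + matvec (A t) (z t) v) ->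
  forall v, cvgn (fun t => z t v).
Proof.
move=> A0 Acvg bcvg bst0 x0 Ax zS v.
have Ast0 u w : 0 <= Ast u w.
  by apply: (cvgr_to_ge (Acvg u w)); exact: nearW.
have [lam lam01 Alam] := contraction_factor x0 Ax.
have [p p_fix] : exists p, forall v, p v = bst v + matvec Ast p v.
  apply: (matvec_fixpoint Ast0 bst0 x0 (lam := lam)); first by case/andP: lam01.
  by move=> u; exact: ltW.
pose e t u := z t u - p u.
pose eps t u := b t u - bst u + (matvec (A t) p u - matvec Ast p u).
have eS t u : e t.+1 u = eps t u + matvec (A t) (e t) u.
  by rewrite /e zS {1}p_fix matvecB /eps; ring.
have eps0 u : (fun t => eps t u) @ \oo --> 0.
  suff : (fun t => eps t u) @ \oo -->
      bst u - bst u + (matvec Ast p u - matvec Ast p u) by rewrite !subrr addr0.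
  apply: cvgD; first by apply: cvgB; [exact: bcvg | exact: cvg_cst].
  by apply: cvgB; [apply: cvg_matvec => // w; exact: cvg_cst | exact: cvg_cst].
have e0 : (fun t => `|e t v|) @ \oo --> 0.
  apply: (matvec_perturbed_contraction_cvg0 (u := fun t u => `|e t u|)
            (eps := fun t u => `|eps t u|) lam01 x0 A0) => // [u | | t u].
  - by apply/norm_cvg0P; exact: eps0.
  - apply: filter_forall => u; apply: (cvgr_le (matvec Ast x u)); last exact: Alam.
    by apply: cvg_matvec => // w; exact: cvg_cst.
  - rewrite eS; apply: le_trans (ler_normD _ _) _; rewrite lerD2l.
    apply: le_trans (ler_norm_sum _ _ _) _; apply: ler_sum => w _.
    by rewrite normrM ger0_norm.
apply/cvg_ex; exists (p v); rewrite -[p v]add0r.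
under eq_fun => t do rewrite -(subrK (p v) (z t v)).
exact: cvgD (norm_cvg0 e0) (cvg_cst _).
Qed.

End LinearRecurrence.

Section OmegaEta.
Variables (R : realType) (V : finType) (Phi : rel V).
Variables (alpha beta : V -> nat -> R) (r s : V -> R).
Hypothesis alpha_ge0 : forall v t, 0 <= alpha v t.
Hypothesis alpha_nondecr : forall v t, alpha v t <= alpha v t.+1.
Hypothesis r_gt0 : forall v, 0 < r v.
Hypothesis s_gt0 : forall v, 0 < s v.
Hypothesis rsV : forall v, r v = (s v)^-1.

Local Notation omega t := (omega_seq Phi alpha r s t).
Local Notation eta t := (eta_seq Phi alpha beta r s t).
Local Notation M := (@adjM R V Phi).
Local Notation W v w := (r v * M v w * s w).

Lemma adjM_ge0 v w : 0 <= M v w.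
Proof. by rewrite /adjM ler0n. Qed.

Lemma W_ge0 v w : 0 <= W v w.
Proof. by rewrite !mulr_ge0 ?adjM_ge0 // ltW. Qed.

Definition omega_den t v :=
  1 + alpha v t + \sum_w W v w * (1 - omega t w).

Lemma omegaS t v : omega t.+1 v = (omega_den t v)^-1.
Proof. by rewrite /= mul1r. Qed.

Lemma omega_gt0_le1 t v : 0 < omega t v <= 1.
Proof.
elim: t v => [|t IH] v; first by rewrite ltr01 lexx.
have den_ge1 : 1 <= omega_den t v.
  rewrite /omega_den -addrA lerDl addr_ge0 //; apply: sumr_ge0 => w _.
  by rewrite mulr_ge0 ?W_ge0 // subr_ge0; case/andP: (IH w).
by rewrite omegaS invr_gt0 (lt_le_trans ltr01 den_ge1) invf_le1 // (lt_le_trans ltr01).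
Qed.

Lemma omega_ge0 t v : 0 <= omega t v.
Proof. by case/andP: (omega_gt0_le1 t v) => /ltW. Qed.

Lemma omega_le1 t v : omega t v <= 1.
Proof. by case/andP: (omega_gt0_le1 t v). Qed.

Lemma omega_den_gt0 t v : 0 < omega_den t v.
Proof. by have /andP[] := omega_gt0_le1 t.+1 v; rewrite omegaS invr_gt0. Qed.

Lemma omega_nonincr t v : omega t.+1 v <= omega t v.
Proof.
elim: t v => [|t IH] v; first exact: omega_le1.
rewrite omegaS [X in _ <= X]omegaS lef_pV2 ?posrE ?omega_den_gt0 //.
rewrite /omega_den lerD ?lerD2l //; apply: ler_sum => w _.
by rewrite ler_wpM2l ?W_ge0 // lerD2l lerN2.
Qed.

Definition omega_lim v := limn (fun t => omega t v).

Lemma omega_cvg v : (fun t => omega t v) @ \oo --> omega_lim v.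
Proof.
apply: nonincreasing_is_cvgn; first by apply/nonincreasing_seqP => t; exact: omega_nonincr.
by exists 0 => _ [t _ <-]; exact: omega_ge0.
Qed.

Lemma omega_lim_le t v : omega_lim v <= omega t v.
Proof.
apply: nonincreasing_cvgn_ge; last exact: omega_cvg.
by apply/nonincreasing_seqP => k; exact: omega_nonincr.
Qed.

Lemma omega_lim_ge0 v : 0 <= omega_lim v.
Proof. by apply: (cvgr_to_ge (@omega_cvg v)); apply: nearW => t; exact: omega_ge0. Qed.

Lemma omega_lim_le1 v : omega_lim v <= 1.
Proof. exact: le_trans (omega_lim_le 0 v) (omega_le1 0 v). Qed.

Lemma omega_lim_balance t v :
  omega_lim v * (1 + alpha v t + \sum_w W v w * (1 - omega_lim w)) <= 1.
Proof.
pose den_t k := 1 + alpha v t + \sum_w W v w * (1 - omega k w).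
have cvg_den_t : (fun k => omega k.+1 v * den_t k) @ \oo -->
    omega_lim v * (1 + alpha v t + \sum_w W v w * (1 - omega_lim w)).
  apply: cvgM; first by move: (@omega_cvg v); rewrite -cvg_shiftS.
  apply: cvgD; first exact: cvg_cst.
  by apply: cvg_sumr => w; apply: cvgMr; apply: cvgB; [exact: cvg_cst | exact: omega_cvg].
apply: (cvgr_to_le cvg_den_t).
exists t => // k tk; rewrite omegaS mulrC ler_pdivrMr ?omega_den_gt0 // mul1r.
by rewrite /den_t /omega_den lerD2r lerD2l; exact: (nondecreasing_seqP _).1 (alpha_nondecr v) t k tk.
Qed.

Definition Dlim v w := omega_lim v * M v w.
Definition excessive v := s v * (1 - omega_lim v).

Lemma Dlim_ge0 v w : 0 <= Dlim v w.
Proof. by rewrite mulr_ge0 ?omega_lim_ge0 ?adjM_ge0. Qed.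

Lemma excessive_ge0 v : 0 <= excessive v.
Proof. by rewrite mulr_ge0 ?subr_ge0 ?omega_lim_le1 // ltW. Qed.

Lemma matvec_Dlim_eq0 f v : omega_lim v = 0 -> matvec Dlim f v = 0.
Proof. by move=> om0; apply: big1 => w _; rewrite /Dlim om0 !mul0r. Qed.

Lemma excessive_omega_lim0 v : omega_lim v = 0 -> excessive v = s v.
Proof. by move=> om0; rewrite /excessive om0 subr0 mulr1. Qed.

Lemma matvec_Dlim_excessive t v :
  matvec Dlim excessive v <= excessive v - omega_lim v * s v * alpha v t.
Proof.
have -> : matvec Dlim excessive v =
    s v * omega_lim v * \sum_w W v w * (1 - omega_lim w).
  rewrite /matvec mulr_sumr; apply: eq_bigr => w _; rewrite /Dlim /excessive rsV.
  by field; rewrite gt_eqF.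
have := omega_lim_balance t v; have := s_gt0 v; rewrite /excessive; nra.
Qed.

Lemma matvec_Dlim_excessive_le v : matvec Dlim excessive v <= excessive v.
Proof.
apply: le_trans (matvec_Dlim_excessive 0 v) _.
by rewrite gerBl !mulr_ge0 ?omega_lim_ge0 // ltW.
Qed.

Lemma iter_Dlim_excessive_nonincr v :
  nonincreasing_seq (fun k => iter k (matvec Dlim) excessive v).
Proof.
apply/nonincreasing_seqP => k; elim: k v => [|k IH] v.
  exact: matvec_Dlim_excessive_le.
by apply: ler_matvec => //; exact: Dlim_ge0.
Qed.

Lemma iter_Dlim_excessive_le k v : iter k (matvec Dlim) excessive v <= excessive v.
Proof. exact: (iter_Dlim_excessive_nonincr v (leq0n k)). Qed.

Lemma matvec_Dlim_excessive_lt t v :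
  alpha v t != 0 -> matvec Dlim excessive v < excessive v.
Proof.
move=> alpha_neq0; have [om0|om_neq0] := eqVneq (omega_lim v) 0.
  by rewrite matvec_Dlim_eq0 // excessive_omega_lim0.
apply: le_lt_trans (matvec_Dlim_excessive t v) _.
rewrite ltrBlDr ltrDl !mulr_gt0 //; last by rewrite lt_def alpha_neq0 alpha_ge0.
by rewrite lt_def om_neq0 omega_lim_ge0.
Qed.

Lemma matvec_Dlim_lt f u v : Phi v u -> (forall w, f w <= excessive w) ->
  f u < excessive u -> matvec Dlim f v < excessive v.
Proof.
move=> Pvu f_le fu_lt; have [om0|om_neq0] := eqVneq (omega_lim v) 0.
  by rewrite matvec_Dlim_eq0 // excessive_omega_lim0.
apply: lt_le_trans (matvec_Dlim_excessive_le v).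
rewrite /matvec (bigD1 u) //= [X in _ < X](bigD1 u) //= ltr_leD //.
  by rewrite ltr_pM2l // /Dlim /adjM Pvu mulr1 lt_def om_neq0 omega_lim_ge0.
by apply: ler_sum => w _; rewrite ler_wpM2l ?Dlim_ge0.
Qed.

Lemma iter_Dlim_excessive_lt p v : path Phi v p ->
  (exists t, alpha (last v p) t != 0) ->
  iter (size p).+1 (matvec Dlim) excessive v < excessive v.
Proof.
elim: p v => [|u p IH] v /=; first by move=> _ [t]; exact: matvec_Dlim_excessive_lt.
move=> /andP[Pvu pu] alpha_last; apply: (matvec_Dlim_lt Pvu).
  by move=> w; exact: (iter_Dlim_excessive_le (size p).+1).
exact: IH.
Qed.

Definition alpha_reachable v := exists w, connect Phi v w /\ exists t, alpha w t != 0.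

Lemma iter_Dlim_excessive_lt_near v : alpha_reachable v ->
  \forall k \near \oo, iter k (matvec Dlim) excessive v < excessive v.
Proof.
move=> [w [/connectP[p pth ->] alpha_w]]; exists (size p).+1 => // k pk.
exact: le_lt_trans (iter_Dlim_excessive_nonincr v pk) (iter_Dlim_excessive_lt pth alpha_w).
Qed.

Lemma omega_lim_lt1 v : alpha_reachable v -> omega_lim v < 1.
Proof.
move=> /iter_Dlim_excessive_lt_near[k _ /(_ k (leqnn k))].
have := iter_matvec_ge0 k v Dlim_ge0 excessive_ge0.
have := s_gt0 v; have := omega_lim_le1 v; rewrite /excessive; nra.
Qed.

Hypothesis nontrivial_scc_alpha_reachable :
  forall v, ~~ trivial_scc Phi (scc Phi v) -> alpha_reachable v.

Lemma iter_Dlim_eq0 f k v : ~ alpha_reachable v ->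
  (#|[set u | connect Phi v u]%SET| <= k)%N -> iter k (matvec Dlim) f v = 0.
Proof.
elim: k v => [|k IH] v unreach; first by rewrite leqn0 cards_eq0 => /eqP/setP/(_ v); rewrite !inE connect0.
move=> card_le; rewrite iterS; apply: big1 => w _; rewrite /Dlim /adjM.
have [Pvw|_] := boolP (Phi v w); last by rewrite mulr0 mul0r.
rewrite IH ?mulr0 //.
  by move=> [u [cwu alpha_u]]; apply: unreach; exists u; split => //; exact: connect_trans (connect1 Pvw) cwu.
rewrite -ltnS; apply: leq_trans (card_reach_arc_lt _ Pvw) card_le.
by apply/contraT => /nontrivial_scc_alpha_reachable /unreach.
Qed.


Lemma Dlim_certificate :
  exists x, (forall v, 0 < x v) /\ (forall v, matvec Dlim x v < x v).
Proof.
have [N _ reach_lt] : \forall N \near \oo, forall v, alpha_reachable v ->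
    iter N (matvec Dlim) excessive v < excessive v.
  apply: filter_forall => v.
  have [/iter_Dlim_excessive_lt_near|unreach] := pselect (alpha_reachable v).
    by apply: filterS => k lt _.
  by apply: nearW => k /unreach.
pose K := maxn N #|V|.
have ltK v : alpha_reachable v -> iter K (matvec Dlim) excessive v < excessive v.
  by apply: reach_lt; exact: leq_maxl.
have eqK f v : ~ alpha_reachable v -> iter K (matvec Dlim) f v = 0.
  by move=> unreach; apply: iter_Dlim_eq0 => //; exact: leq_trans (max_card _) (leq_maxr _ _).
have Ke : \forall e \near (0 : R)^'+, forall v,
    iter K (matvec Dlim) (fun w => excessive w + e * cst 1 w) v < excessive v + e * cst 1 v.
  apply: filter_forall => v.
  have [reach|unreach] := pselect (alpha_reachable v); last first.
    near=> e; rewrite iter_matvecDZ !eqK // mulr0 addr0 ltr_pwDr ?excessive_ge0 // /cst mulr1.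
    by near: e; exact: nbhs_right_gt.
  set c := iter K (matvec Dlim) (cst 1) v.
  have c_ge0 : 0 <= c by apply: iter_matvec_ge0 => // *; exact: Dlim_ge0.
  have gap : 0 < (excessive v - iter K (matvec Dlim) excessive v) / (c + 1).
    by apply: divr_gt0; [rewrite subr_gt0; exact: ltK | lra].
  near=> e; rewrite iter_matvecDZ -/c /cst mulr1.
  have e_gt0 : 0 < e by near: e; exact: nbhs_right_gt.
  have : e < (excessive v - iter K (matvec Dlim) excessive v) / (c + 1).
    by near: e; exact: nbhs_right_lt.
  rewrite ltr_pdivlMr; lra.
near (0 : R)^'+ => e.
apply: (matvec_certificate (N := K) Dlim_ge0); last exact: (near Ke e).
move=> v; rewrite /cst mulr1; apply: ltr_pwDr; last exact: excessive_ge0.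
by near: e; exact: nbhs_right_gt.
Unshelve. all: by end_near. Qed.

Hypothesis beta_ge0 : forall v t, 0 <= beta v t.
Hypothesis beta_cvg : forall v, cvgn (beta v).

Lemma eta_cvg v : cvgn (fun t => eta t v).
Proof.
have [x [x_gt0 Dx_lt]] := Dlim_certificate.
pose zeta t u := omega t u * eta t u.
have omegaS_cvg u : (fun t => omega t.+1 u) @ \oo --> omega_lim u.
  by move: (@omega_cvg u); rewrite -cvg_shiftS.
have zeta_cvg : forall u, cvgn (fun t => zeta t u).
  apply: (matvec_recurrence_cvg (A := fun t u w => omega t.+1 u * M u w)
    (b := fun t u => omega t.+1 u * (1 + beta u t))
    (bst := fun u => omega_lim u * (1 + limn (beta u))) _ _ _ _ x_gt0 Dx_lt).
  - by move=> t u w; rewrite mulr_ge0 ?omega_ge0 ?adjM_ge0.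
  - by move=> u w; apply: cvgMl.
  - by move=> u; apply: cvgM => //; apply: cvgD; [exact: cvg_cst | exact: beta_cvg].
  - move=> u; rewrite mulr_ge0 ?omega_lim_ge0 // addr_ge0 //.
    by apply: limr_ge; [exact: beta_cvg | apply: nearW => t; exact: beta_ge0].
  - move=> t u; rewrite /zeta /= mulrDr mulr_sumr; congr (_ + _).
    by apply: eq_bigr => w _; rewrite !mulrA.
have etaS t : eta t.+1 v = 1 + beta v t + matvec M (zeta t) v.
  by rewrite /= /matvec; congr (_ + _); apply: eq_bigr => w _; rewrite mulrA.
apply: (cvgP (1 + limn (beta v) + matvec M (fun w => limn (zeta ^~ w)) v)).
rewrite -cvg_shiftS; under eq_fun do rewrite etaS.
apply: cvgD; first by apply: cvgD; [exact: cvg_cst | exact: beta_cvg].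
by apply: cvg_matvec => [* | w]; [exact: cvg_cst | exact: zeta_cvg].
Qed.

End OmegaEta.

Theorem theorem2 (R : realType) (V : finType) (Phi : rel V)
  (alpha beta : V -> nat -> R) (r s : V -> R) :
  (forall v t, 0 <= alpha v t) ->
  (forall v t, 0 <= beta v t) ->
  (forall v t, alpha v t <= alpha v t.+1) ->
  (forall v, cvgn (beta v)) ->
  (forall v, 0 < r v) -> (forall v, 0 < s v) ->
  (forall v, r v = (s v)^-1) ->
  (forall v, ~~ trivial_scc Phi (scc Phi v) ->
     exists w, connect Phi v w /\ exists t, alpha w t != 0) ->
  (forall v, cvgn (fun t => eta_seq Phi alpha beta r s t v)) /\
  (forall v, cvgn (fun t => omega_seq Phi alpha r s t v)) /\
  (forall v t, omega_seq Phi alpha r s t.+1 v <= omega_seq Phi alpha r s t v) /\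
  (forall v, (exists w, connect Phi v w /\ exists t, alpha w t != 0) ->
     limn (fun t => omega_seq Phi alpha r s t v) < 1).
Proof.
move=> alpha_ge0 beta_ge0 alpha_nondecr beta_cvg r_gt0 s_gt0 rsV scc_reach.
split; first exact: eta_cvg.
split; first by move=> v; exact: omega_cvg.
split; first by move=> v t; exact: omega_nonincr.
exact: omega_lim_lt1.
Qed.
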